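(* Let $K$ be a field of characteristic $\neq 2$, $n\ge1$, and let $\mathcal C$ be an EACP over $K$ with natural basis $\{h_1,\dots,h_n,r\}$ and structural constants $a_{ij},b_i$. Suppose $\sum_{j=1}^n a_{ij}a_{jk}=0$ and $b_i=0$ for all $i,k=1,\dots,n$. Then $\mathcal C$ is alternative, power associative, and satisfies the Jacobi identity $(xy)z+(yz)x+(zx)y=0$ and the Jordan identity $(xy)x^2=x(yx^2)$ for all $x,y,z\in\mathcal C$.
   Context: An EACP over a field $K$ (characteristic $\neq 2$) is a $K$-algebra $\mathcal C$ with a basis $\{h_1,\dots,h_n,r\}$ (called a natural basis) whose multiplication is determined by bilinearity from $$h_ir=rh_i=\tfrac12\Big(\sum_{j=1}^n a_{ij}h_j+b_ir\Big),\qquad h_ih_j=0\ (i,j=1,\dots,n),\qquad rr=0,$$ for some constants $a_{ij},b_i\in K$. Alternative means $(xx)y=x(xy)$ and $(yx)x=y(xx)$ for all $x,y$; power associative means $x^mx^k=x^{m+k}$ for all $x$ and all positive integers $m,k$. *)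

From HB Require Import structures.
From mathcomp Require Import all_boot all_order all_algebra.
Set Implicit Arguments. Unset Strict Implicit. Unset Printing Implicit Defensive.
Import GRing.Theory.
Local Open Scope ring_scope.

(* The EACP with natural basis {h_1..h_n, r}: basis indexed by option 'I_n,
   Some i = h_(i+1), None = r. Elements are coordinate vectors. *)
Notation eacp K n := {ffun option (ordinal n) -> (K^o)%type}.

Definition ebasis (K : fieldType) (n : nat) (u : option 'I_n) : eacp K n :=
  [ffun w => (w == u)%:R].

Definition eacp_table (K : fieldType) (n : nat)
  (a : 'I_n -> 'I_n -> K) (b : 'I_n -> K) (u v : option 'I_n) : eacp K n :=
  match u, v with
  | Some i, None | None, Some i =>
      2^-1 *: (\sum_j a i j *: ebasis K (Some j) + b i *: ebasis K None)
  | _, _ => 0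
  end.

Definition eacp_mul (K : fieldType) (n : nat)
  (a : 'I_n -> 'I_n -> K) (b : 'I_n -> K) (x y : eacp K n) : eacp K n :=
  \sum_u \sum_v (x u * y v) *: eacp_table a b u v.

(* right-normed powers: x^1 = x, x^(m+1) = x^m x (used for m >= 1) *)
Definition eacp_pow (K : fieldType) (n : nat)
  (a : 'I_n -> 'I_n -> K) (b : 'I_n -> K) (x : eacp K n) (m : nat) : eacp K n :=
  iter m.-1 (fun y => eacp_mul a b y x) x.

From mathcomp Require Import all_boot all_order all_algebra ring.
Set Implicit Arguments. Unset Strict Implicit. Unset Printing Implicit Defensive.
Import GRing.Theory.
Local Open Scope ring_scope.

(* The multiplication is commutative, and when b = 0 the product xy lies in the
   span of the h_k, with coordinates (1/2) sum_i s_i a_ik where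
   s_i = x_(h_i) y_r + x_r y_(h_i).  Multiplying it by z therefore gives
   coordinates proportional to sum_i (sum_j s_j a_ji) a_ik = 0 (A^2 = 0), so
   every product of three elements vanishes, however bracketed, and all four
   identities reduce to 0 = 0. *)

Lemma big_option (R : zmodType) (T : finType) (F : option T -> R) :
  \sum_u F u = F None + \sum_i F (Some i).
Proof.
rewrite (bigD1 None) //=; congr (_ + _).
rewrite (reindex_omap Some id) => [|[i|] //].
by apply: eq_bigl => i /=; rewrite eqxx.
Qed.

Section Coordinates.
Variables (K : fieldType) (n : nat) (a : 'I_n -> 'I_n -> K) (b : 'I_n -> K).

Lemma eacp_scaleE (c : K) (f : eacp K n) w : (c *: f) w = c * f w.
Proof. by rewrite ffunE. Qed.

Lemma eacp_tableE i w :
  eacp_table a b (Some i) None w = 2^-1 * oapp (a i) (b i) w.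
Proof.
rewrite /eacp_table eacp_scaleE ffunE eacp_scaleE sum_ffunE; congr (_ * _).
under eq_bigr => j _ do rewrite eacp_scaleE ffunE.
rewrite ffunE.
case: w => [k|] /=.
  rewrite (bigD1 k) //= big1 => [|j /negbTE jk].
    by rewrite eqxx mulr1 mulr0 !addr0.
  by rewrite (inj_eq (@Some_inj _)) eq_sym jk mulr0.
by rewrite big1 ?add0r ?mulr1 // => j _; rewrite mulr0.
Qed.

Lemma eacp_mulE (x y : eacp K n) w :
  eacp_mul a b x y w =
  2^-1 * \sum_i (x (Some i) * y None + x None * y (Some i)) * oapp (a i) (b i) w.
Proof.
have tableNN : eacp_table a b None None = 0 by [].
have tableNS i : eacp_table a b None (Some i) = eacp_table a b (Some i) None by [].
have tableSS i j : eacp_table a b (Some i) (Some j) = 0 by [].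
rewrite /eacp_mul sum_ffunE big_option sum_ffunE big_option tableNN scaler0.
rewrite ffunE add0r -big_split mulr_sumr; apply: eq_bigr => i _.
rewrite sum_ffunE big_option big1 => [|j _]; last by rewrite tableSS scaler0 ffunE.
by rewrite addr0 tableNS !(eacp_scaleE (_ * _)) !eacp_tableE /=; ring.
Qed.

Lemma eacp_mulC (x y : eacp K n) : eacp_mul a b x y = eacp_mul a b y x.
Proof.
apply/ffunP => w; rewrite !eacp_mulE; congr (_ * _).
by apply: eq_bigr => i _; rewrite addrC (mulrC (y _)) (mulrC (y None)).
Qed.

End Coordinates.

Section SquareZeroConstants.
Variables (K : fieldType) (n : nat) (a : 'I_n -> 'I_n -> K) (b : 'I_n -> K).
Hypothesis a_sqr0 : forall i k : 'I_n, \sum_(j < n) a i j * a j k = 0.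
Hypothesis b0 : forall i : 'I_n, b i = 0.

Local Notation mul := (eacp_mul a b).

Lemma eacp_mul_None0 (x y : eacp K n) : mul x y None = 0.
Proof. by rewrite eacp_mulE big1 ?mulr0 // => i _; rewrite /= b0 mulr0. Qed.

Lemma sum_eacp_mul_a (x y : eacp K n) k : \sum_i mul x y (Some i) * a i k = 0.
Proof.
under eq_bigr => i _ do rewrite eacp_mulE -mulrA mulr_suml.
rewrite -mulr_sumr exchange_big big1 ?mulr0 // => j _ /=.
under eq_bigr => i _ do rewrite -mulrA.
by rewrite -mulr_sumr a_sqr0 mulr0.
Qed.

Lemma eacp_mul_mull0 (x y z : eacp K n) : mul (mul x y) z = 0.
Proof.
apply/ffunP => -[k|]; rewrite eacp_mulE ffunE; last first.
  by rewrite big1 ?mulr0 // => i _; rewrite /= b0 mulr0.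
under eq_bigr => i _ do rewrite eacp_mul_None0 mul0r addr0 mulrAC.
by rewrite -mulr_suml sum_eacp_mul_a mul0r mulr0.
Qed.

Lemma eacp_mul_mulr0 (x y z : eacp K n) : mul z (mul x y) = 0.
Proof. by rewrite eacp_mulC eacp_mul_mull0. Qed.

Lemma eacp_pow_add (x : eacp K n) m k : (0 < m)%N -> (0 < k)%N ->
  mul (eacp_pow a b x m) (eacp_pow a b x k) = eacp_pow a b x (m + k).
Proof.
have powSS j : eacp_pow a b x j.+2 = mul (eacp_pow a b x j.+1) x by [].
have pow3 j : eacp_pow a b x j.+3 = 0 by rewrite 2!powSS eacp_mul_mull0.
case: m => [|[|m]] // _; case: k => [|[|k]] // _.
- by rewrite powSS eacp_mul_mulr0 add1n pow3.
- by rewrite powSS eacp_mul_mull0 addn1 pow3.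
- by rewrite powSS eacp_mul_mull0 !addSn addnS pow3.
Qed.

End SquareZeroConstants.

Theorem mainTheorem3 (K : fieldType) (n : nat) (hn : (0 < n)%N)
  (hK : (2 : K) != 0)
  (a : 'I_n -> 'I_n -> K) (b : 'I_n -> K)
  (ha : forall i k : 'I_n, \sum_(j < n) a i j * a j k = 0)
  (hb : forall i : 'I_n, b i = 0) :
  let mul := eacp_mul a b in
  (* alternative *)
  (forall x y : eacp K n, mul (mul x x) y = mul x (mul x y)) /\
  (forall x y : eacp K n, mul (mul y x) x = mul y (mul x x)) /\
  (* power associative *)
  (forall (x : eacp K n) (m k : nat), (0 < m)%N -> (0 < k)%N ->
      mul (eacp_pow a b x m) (eacp_pow a b x k) = eacp_pow a b x (m + k)) /\
  (* Jacobi identity *)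
  (forall x y z : eacp K n,
      mul (mul x y) z + mul (mul y z) x + mul (mul z x) y = 0) /\
  (* Jordan identity *)
  (forall x y : eacp K n, mul (mul x y) (mul x x) = mul x (mul y (mul x x))).
Proof.
move=> mul; rewrite /mul.
have prod_mul0 := eacp_mul_mull0 ha hb; have mul_prod0 := eacp_mul_mulr0 ha hb.
split; first by move=> x y; rewrite prod_mul0 mul_prod0.
split; first by move=> x y; rewrite prod_mul0 mul_prod0.
split; first exact: eacp_pow_add ha hb.
split; first by move=> x y z; rewrite !prod_mul0 !addr0.
by move=> x y; rewrite prod_mul0 mul_prod0.
Qed.
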